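(* Fix integers $n,d\ge 1$, constants $0<h_{min}<h_{max}$, an initial state $\mathcal{X}^{(0)}=[\mathbf{x}_1^{(0)},\ldots,\mathbf{x}_n^{(0)}]\in\mathbb{R}^{dn}$, an initial bandwidth $h_1\in[h_{min},h_{max}]$, and a non-negative sequence $(\nu_k)$ with $\nu_k\to 0$. Let $(\mathcal{X}^{(k)},h_k)$ be generated by the Doubly Stochastic Mean-Shift (DSMS) process described in the context. Then almost surely, for every $k\ge 1$, $$\mathbb{E}\left[L_{h_{k+1}}(\mathcal{X}^{(k+1)})\,\middle|\,\mathcal{X}^{(k)},\,h_k\right]\ \ge\ L_{h_k}(\mathcal{X}^{(k)}).$$ Consequently, the sequence $\left(L_{h_k}(\mathcal{X}^{(k)})\right)_k$ is a discrete-time non-negative submartingale adapted to the process $(\mathcal{X}^{(k)},h_k)$.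
   Context: A profile function is a map $k:[0,\infty)\to\mathbb{R}_+$ that vanishes on $[1,\infty)$, is $C^1$, non-increasing and convex, with $k'(t)<0$ for all $t\in[0,1)$ (e.g. $k(t)=(1-t)_+^{\alpha}$, $\alpha=2,3,4$). The associated kernel on $\mathbb{R}^d$ is $K(\mathbf{u})=k(\|\mathbf{u}\|^2)$ and the weight function is $G(\mathbf{u})=-k'(\|\mathbf{u}\|^2)\ge 0$; $\|\cdot\|$ is the Euclidean norm. A state is $\mathcal{X}=[\mathbf{x}_1,\ldots,\mathbf{x}_n]\in\mathbb{R}^{dn}$ with $\mathbf{x}_i\in\mathbb{R}^d$. For $h>0$ define the cost $L_h(\mathcal{X})=\sum_{1\le i\le j\le n}K\big((\mathbf{x}_i-\mathbf{x}_j)/h\big)$ and the mean-shift operator $$\mathcal{S}_h(x;\mathcal{X})=\frac{\sum_{i=1}^n G\big((x-\mathbf{x}_i)/h\big)\,\mathbf{x}_i}{\sum_{i=1}^n G\big((x-\mathbf{x}_i)/h\big)},\quad x\in\mathbb{R}^d.$$ DSMS process: given $\mathcal{X}^{(0)}$, $h_1\in[h_{min},h_{max}]$ and $(\nu_k)$, for $k=0,1,2,\ldots$: if $k\ge1$, set $\delta_k=\min\{\nu_k,\ (h_k/h_{min})^2-1,\ 1-(h_k/h_{max})^2\}$, draw $\alpha_k$ uniformly on $(1-\delta_k,1+\delta_k)$ (with $\alpha_k=1$ if $\delta_k=0$), and set $h_{k+1}=h_k/\sqrt{\alpha_k}$ (so $h_{k+1}\in[h_{min},h_{max}]$); draw an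 index $i_k$ uniformly from $\{1,\ldots,n\}$; then set $\mathbf{x}_{i_k}^{(k+1)}=\mathcal{S}_{h_{k+1}}(\mathbf{x}_{i_k}^{(k)};\mathcal{X}^{(k)})$ and $\mathbf{x}_j^{(k+1)}=\mathbf{x}_j^{(k)}$ for $j\ne i_k$. The indices $i_k$ are i.i.d., independent of each other and of all previous choices, and the sequences $(i_k)$ and $(h_k)$ are independent. *)

From Stdlib Require Import Reals.
From Coquelicot Require Import Coquelicot.
Open Scope R_scope.

Fixpoint sumR (m : nat) (f : nat -> R) : R :=
  match m with
  | O => 0
  | S m' => sumR m' f + f m'
  end.

(* Points of R^d are functions nat -> R (coordinates 0..d-1);
   a state X : nat -> (nat -> R) lists particles x_0 .. x_{n-1}. *)
Definition vec := nat -> R.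
Definition state := nat -> vec.

Definition sqnorm (d : nat) (u : vec) : R := sumR d (fun j => (u j) ^ 2).
Definition vdiff (x y : vec) : vec := fun j => x j - y j.
Definition vscale (c : R) (x : vec) : vec := fun j => c * x j.

Definition is_profile (k k' : R -> R) : Prop :=
  (forall t, 0 <= t -> 0 <= k t) /\
  (forall t, 1 <= t -> k t = 0) /\
  (forall t, 0 < t -> is_derive k t (k' t)) /\
  filterlim (fun s => (k s - k 0) / s) (at_right 0) (locally (k' 0)) /\
  (forall t, 0 < t -> continuous k' t) /\
  filterlim k' (at_right 0) (locally (k' 0)) /\
  (forall s t, 0 <= s -> s <= t -> k t <= k s) /\
  (forall s t l, 0 <= s -> 0 <= t -> 0 <= l <= 1 ->
      k (l * s + (1 - l) * t) <= l * k s + (1 - l) * k t) /\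
  (forall t, 0 <= t < 1 -> k' t < 0).

Definition Kker (k : R -> R) (d : nat) (u : vec) : R := k (sqnorm d u).
Definition Gw (k' : R -> R) (d : nat) (u : vec) : R := - k' (sqnorm d u).

Definition Lcost (k : R -> R) (n d : nat) (h : R) (X : state) : R :=
  sumR n (fun j => sumR (S j) (fun i =>
     Kker k d (vscale (/ h) (vdiff (X i) (X j))))).

Definition meanshift (k' : R -> R) (n d : nat) (h : R) (X : state) (x : vec) : vec :=
  fun c =>
    sumR n (fun i => Gw k' d (vscale (/ h) (vdiff x (X i))) * X i c) /
    sumR n (fun i => Gw k' d (vscale (/ h) (vdiff x (X i)))).

Definition ms_step (k' : R -> R) (n d : nat) (h : R) (X : state) (i : nat) : state :=
  fun j => if Nat.eqb j i then meanshift k' n d h X (X i) else X j.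

Definition delta (hmin hmax nuk h : R) : R :=
  Rmin nuk (Rmin ((h / hmin) ^ 2 - 1) (1 - (h / hmax) ^ 2)).

Definition newh (h a : R) : R := h / sqrt a.

Definition E_alpha (del : R) (f : R -> R) : R :=
  if Rlt_dec 0 del then RInt f (1 - del) (1 + del) / (2 * del) else f 1.

(* One-step conditional expectation of L_{h_{k+1}}(X^{(k+1)}) given
   (X^{(k)}, h_k) = (X, h), at step k >= 1 (uses nu_k): alpha_k uniform,
   i_k uniform on {0..n-1}, independent. *)
Definition cond_exp_next (k k' : R -> R) (n d : nat) (hmin hmax nuk : R)
    (X : state) (h : R) : R :=
  E_alpha (delta hmin hmax nuk h) (fun a =>
    / INR n * sumR n (fun i =>
       Lcost k n d (newh h a) (ms_step k' n d (newh h a) X i))).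

(* Support of (X^{(k)}, h_k), k >= 1, for the DSMS process started at (X0, h1):
   (X^{(1)}, h_1) = (S-update of X0 at some i with bandwidth h1, h1), and each later
   pair is obtained with some admissible alpha_k and index i_k. *)
Inductive reachable (k' : R -> R) (n d : nat) (hmin hmax : R) (nu : nat -> R)
    (X0 : state) (h1 : R) : nat -> state -> R -> Prop :=
  | reach1 : forall i, (i < n)%nat ->
      reachable k' n d hmin hmax nu X0 h1 1 (ms_step k' n d h1 X0 i) h1
  | reachS : forall m X h a i,
      reachable k' n d hmin hmax nu X0 h1 m X h -> (i < n)%nat ->
      (let del := delta hmin hmax (nu m) h in
       (0 < del /\ 1 - del < a < 1 + del) \/ (~ 0 < del /\ a = 1)) ->
      reachable k' n d hmin hmax nu X0 h1 (S m)
        (ms_step k' n d (newh h a) X i) (newh h a).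

(* Convexity of the profile gives the tangent
   inequality k t >= k s + k' s * (t - s). Summed over the pairs containing particle i,
   it shows that moving x_i to y raises L_h by at least
   sum_j G_j (|x_i - x_j|^2 - |y - x_j|^2) / h^2, which is non-negative when y is the
   G-weighted barycenter of the x_j, i.e. the mean-shift point; so each update, and hence
   the average over i, does not decrease L_h. Replacing h by h / sqrt alpha multiplies
   every squared distance by alpha, so the tangent inequality again gives
   L_{h / sqrt alpha}(X) >= L_h(X) + (alpha - 1) beta for a constant beta, and this affine
   minorant averages to L_h(X) over alpha uniform on (1 - delta, 1 + delta). *)

From Stdlib Require Import Reals Lra Lia Psatz.
From Coquelicot Require Import Coquelicot.
Open Scope R_scope.

Lemma sumR_S m f : sumR (S m) f = sumR m f + f m.
Proof. reflexivity. Qed.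

Lemma sumR_ext m f g : (forall j, (j < m)%nat -> f j = g j) -> sumR m f = sumR m g.
Proof.
  induction m as [|m IH]; simpl; intros Hfg; [reflexivity|].
  rewrite IH by (intros; apply Hfg; lia). rewrite Hfg by lia. reflexivity.
Qed.

Lemma sumR_le m f g : (forall j, (j < m)%nat -> f j <= g j) -> sumR m f <= sumR m g.
Proof.
  induction m as [|m IH]; simpl; intros Hfg; [lra|].
  pose proof (Hfg m ltac:(lia)). pose proof (IH ltac:(intros; apply Hfg; lia)). lra.
Qed.

Lemma sumR_plus m f g : sumR m (fun j => f j + g j) = sumR m f + sumR m g.
Proof. induction m; simpl; lra. Qed.

Lemma sumR_minus m f g : sumR m (fun j => f j - g j) = sumR m f - sumR m g.
Proof. induction m; simpl; lra. Qed.

Lemma sumR_scal m c f : sumR m (fun j => c * f j) = c * sumR m f.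
Proof. induction m; simpl; lra. Qed.

Lemma sumR_const m c : sumR m (fun _ => c) = INR m * c.
Proof. induction m as [|m IH]; [simpl; lra|]. rewrite S_INR. rewrite sumR_S, IH. lra. Qed.

Lemma sumR_zero m : sumR m (fun _ => 0) = 0.
Proof. induction m; simpl; lra. Qed.

Lemma sumR_swap m p (F : nat -> nat -> R) :
  sumR m (fun i => sumR p (F i)) = sumR p (fun j => sumR m (fun i => F i j)).
Proof.
  induction m as [|m IH]; simpl.
  - symmetry. apply sumR_zero.
  - rewrite IH, <- sumR_plus. reflexivity.
Qed.

Lemma sumR_nonneg m f : (forall j, (j < m)%nat -> 0 <= f j) -> 0 <= sumR m f.
Proof.
  intros Hf. rewrite <- (sumR_zero m). apply sumR_le. exact Hf.
Qed.

Lemma sumR_ge_term m f i :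
  (forall j, (j < m)%nat -> 0 <= f j) -> (i < m)%nat -> f i <= sumR m f.
Proof.
  induction m as [|m IH]; simpl; intros Hf Hi; [lia|].
  assert (Hm : 0 <= sumR m f) by (apply sumR_nonneg; intros; apply Hf; lia).
  destruct (Nat.eq_dec i m) as [->|Him]; [lra|].
  pose proof (IH ltac:(intros; apply Hf; lia) ltac:(lia)). pose proof (Hf m ltac:(lia)). lra.
Qed.

Lemma sumR_indicator m i v :
  sumR m (fun a => if Nat.eqb a i then v else 0) = if Nat.ltb i m then v else 0.
Proof.
  induction m as [|m IH]; [reflexivity|]. rewrite sumR_S, IH.
  destruct (Nat.eqb_spec m i), (Nat.ltb_spec i m), (Nat.ltb_spec i (S m)); lia || lra.
Qed.

(* A pair [a <= b] through [i] contributes the value of [c] at its other end. *)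
Lemma sumR_pairs_through m i (c : nat -> R) : (i < m)%nat ->
  sumR m (fun b => sumR (S b) (fun a =>
    if Nat.eqb a i then c b else if Nat.eqb b i then c a else 0)) = sumR m c.
Proof.
  intros Hi.
  assert (Hrow : forall b, sumR (S b) (fun a =>
      if Nat.eqb a i then c b else if Nat.eqb b i then c a else 0)
    = if Nat.ltb b i then 0 else if Nat.eqb b i then sumR (S i) c else c b).
  { intros b. destruct (Nat.ltb_spec b i), (Nat.eqb_spec b i) as [->|Hbi]; try lia.
    - transitivity (sumR (S b) (fun _ => 0)); [|apply sumR_zero].
      apply sumR_ext. intros a Ha.
      destruct (Nat.eqb_spec a i); [lia|]. destruct (Nat.eqb_spec b i); [lia|reflexivity].
    - apply sumR_ext. intros a Ha. destruct (Nat.eqb_spec a i) as [->|]; reflexivity.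
    - transitivity (sumR (S b) (fun a => if Nat.eqb a i then c b else 0)).
      + apply sumR_ext. intros a Ha. destruct (Nat.eqb_spec b i); [lia|reflexivity].
      + rewrite sumR_indicator. destruct (Nat.ltb_spec i (S b)); [reflexivity|lia]. }
  assert (Hprefix : forall p, sumR p (fun b => sumR (S b) (fun a =>
      if Nat.eqb a i then c b else if Nat.eqb b i then c a else 0))
    = if Nat.leb p i then 0 else sumR p c).
  { induction p as [|p IH]; [reflexivity|]. rewrite sumR_S, IH, Hrow.
    destruct (Nat.leb_spec p i), (Nat.ltb_spec p i), (Nat.leb_spec (S p) i),
      (Nat.eqb_spec p i) as [->|]; simpl; lia || lra. }
  rewrite Hprefix. destruct (Nat.leb_spec m i); [lia|reflexivity].
Qed.

Lemma sqnorm_nonneg d v : 0 <= sqnorm d v.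
Proof. apply sumR_nonneg. intros. apply pow2_ge_0. Qed.

Lemma sqnorm_scale d c v : sqnorm d (vscale c v) = c ^ 2 * sqnorm d v.
Proof. unfold sqnorm, vscale. rewrite <- sumR_scal. apply sumR_ext. intros; ring. Qed.

Lemma sqnorm_scale_diff_sym d c u v :
  sqnorm d (vscale c (vdiff u v)) = sqnorm d (vscale c (vdiff v u)).
Proof. apply sumR_ext. intros. unfold vscale, vdiff. ring. Qed.

Lemma sqnorm_scale_diff_self d c u : sqnorm d (vscale c (vdiff u u)) = 0.
Proof.
  rewrite <- (sumR_zero d). apply sumR_ext. intros. unfold vscale, vdiff. ring.
Qed.

Lemma exists_small_factor a e : 0 < a -> 0 < e -> exists l, 0 < l <= 1 /\ l * a < e.
Proof.
  intros Ha He. exists (Rmin 1 (e / (2 * a))). split.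
  - split; [apply Rmin_pos; [lra|apply Rdiv_lt_0_compat; lra]|apply Rmin_l].
  - apply Rle_lt_trans with (e / (2 * a) * a).
    + apply Rmult_le_compat_r; [lra|apply Rmin_r].
    + replace (e / (2 * a) * a) with (e / 2) by (field; lra). lra.
Qed.

(* Coquelicot states these with the [plus] and [mult] of a normed module, which [apply]
   does not unify with [Rplus] and [Rmult]. *)
Lemma continuous_Rplus (f g : R -> R) x :
  continuous f x -> continuous g x -> continuous (fun y => f y + g y) x.
Proof. exact (continuous_plus f g x). Qed.

Lemma continuous_Rmult (f g : R -> R) x :
  continuous f x -> continuous g x -> continuous (fun y => f y * g y) x.
Proof. exact (continuous_mult f g x). Qed.

Lemma continuous_Ropp (f : R -> R) x : continuous f x -> continuous (fun y => - f y) x.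
Proof. exact (continuous_opp f x). Qed.

Lemma continuous_Rminus (f g : R -> R) x :
  continuous f x -> continuous g x -> continuous (fun y => f y - g y) x.
Proof. exact (continuous_minus f g x). Qed.

Lemma continuous_Rdiv (f g : R -> R) x :
  continuous f x -> continuous g x -> g x <> 0 -> continuous (fun y => f y / g y) x.
Proof. intros Hf Hg Hgx. apply continuous_Rmult; [exact Hf|]. apply continuous_Rinv_comp; auto. Qed.

Lemma continuous_pow2 (f : R -> R) x : continuous f x -> continuous (fun y => f y ^ 2) x.
Proof.
  intros Hf. apply (continuous_ext (fun y => f y * f y)).
  - intros y. change (f y * f y = f y ^ 2). ring.
  - apply continuous_Rmult; exact Hf.
Qed.

Lemma continuous_sumR m (F : nat -> R -> R) x :
  (forall j, (j < m)%nat -> continuous (F j) x) -> continuous (fun y => sumR m (fun j => F j y)) x.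
Proof.
  induction m as [|m IH]; simpl; intros HF; [apply continuous_const|].
  apply continuous_Rplus; [apply IH; intros; apply HF; lia|apply HF; lia].
Qed.

Lemma continuous_comp_nonneg (phi q : R -> R) x :
  filterlim phi (at_right 0) (locally (phi 0)) ->
  (forall t, 0 < t -> continuous phi t) ->
  (forall y, 0 <= q y) -> continuous q x -> continuous (fun y => phi (q y)) x.
Proof.
  intros Hphi0 Hphi Hq Hqx.
  destruct (Rlt_dec 0 (q x)) as [Hpos|Hzero]; [apply continuous_comp; auto|].
  assert (Hqx0 : q x = 0) by (pose proof (Hq x); lra).
  apply filterlim_locally. intros eps. rewrite Hqx0.
  destruct (proj1 (filterlim_locally _ _) Hphi0 eps) as [e He].
  generalize (proj1 (filterlim_locally _ _) Hqx e). apply filter_imp. intros y Hy.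
  rewrite Hqx0 in Hy. destruct (Req_dec (q y) 0) as [->|Hqy]; [apply ball_center|].
  apply He; [exact Hy|]. pose proof (Hq y). lra.
Qed.

Section Profile.

Variables k k' : R -> R.
Hypothesis Hprof : is_profile k k'.

Lemma profile_nonneg t : 0 <= t -> 0 <= k t.
Proof. apply Hprof. Qed.

Lemma profile_is_derive t : 0 < t -> is_derive k t (k' t).
Proof. apply Hprof. Qed.

Lemma profile_rderive0 : filterlim (fun s => (k s - k 0) / s) (at_right 0) (locally (k' 0)).
Proof. apply Hprof. Qed.

Lemma profile_deriv_continuous t : 0 < t -> continuous k' t.
Proof. apply Hprof. Qed.

Lemma profile_deriv_rcont0 : filterlim k' (at_right 0) (locally (k' 0)).
Proof. apply Hprof. Qed.

Lemma profile_nonincreasing s t : 0 <= s -> s <= t -> k t <= k s.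
Proof. apply Hprof. Qed.

Lemma profile_convex s t l : 0 <= s -> 0 <= t -> 0 <= l <= 1 ->
  k (l * s + (1 - l) * t) <= l * k s + (1 - l) * k t.
Proof. apply Hprof. Qed.

Lemma profile_deriv_neg t : 0 <= t < 1 -> k' t < 0.
Proof. apply Hprof. Qed.

Lemma profile_slope_approx s t : 0 <= s -> 0 <= t -> t <> s ->
  forall eps, 0 < eps -> exists l, 0 < l <= 1 /\
    Rabs ((k (s + l * (t - s)) - k s) / (l * (t - s)) - k' s) < eps.
Proof.
  intros Hs Ht Hts eps Heps.
  assert (Hu : 0 < Rabs (t - s)) by (apply Rabs_pos_lt; lra).
  destruct (Req_dec s 0) as [->|Hs0].
  - destruct (proj1 (filterlim_locally _ _) profile_rderive0 (mkposreal _ Heps)) as [e He].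
    destruct (exists_small_factor (t - 0) e) as [l [Hl Hle]]; [lra|apply cond_pos|].
    exists l. split; [exact Hl|]. rewrite Rplus_0_l.
    apply (He (l * (t - 0))); [|nra].
    change (Rabs (l * (t - 0) - 0) < e). rewrite Rminus_0_r, Rabs_pos_eq; nra.
  - destruct (proj1 (is_derive_Reals _ _ _) (profile_is_derive s ltac:(lra)) eps Heps)
      as [e He].
    destruct (exists_small_factor (Rabs (t - s)) e) as [l [Hl Hle]]; [exact Hu|apply cond_pos|].
    exists l. split; [exact Hl|]. apply He.
    + apply Rmult_integral_contrapositive. split; lra.
    + rewrite Rabs_mult, (Rabs_pos_eq l); lra.
Qed.

Lemma profile_tangent s t : 0 <= s -> 0 <= t -> k s + k' s * (t - s) <= k t.
Proof.
  intros Hs Ht. destruct (Req_dec t s) as [->|Hts]; [lra|].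
  assert (Hu : 0 < Rabs (t - s)) by (apply Rabs_pos_lt; lra).
  cut (k' s * (t - s) <= k t - k s); [lra|].
  apply Rle_plus_epsilon. intros eps Heps.
  destruct (profile_slope_approx s t Hs Ht Hts (eps / Rabs (t - s))) as [l [Hl Hq]].
  { apply Rdiv_lt_0_compat; lra. }
  set (q := (k (s + l * (t - s)) - k s) / (l * (t - s))) in Hq.
  assert (Hchord : q * (t - s) <= k t - k s).
  { assert (Hconv : k (s + l * (t - s)) <= l * k t + (1 - l) * k s).
    { replace (s + l * (t - s)) with (l * t + (1 - l) * s) by ring.
      apply profile_convex; lra. }
    assert (Hql : q * (l * (t - s)) = k (s + l * (t - s)) - k s).
    { unfold q. field. split; lra. }
    apply Rmult_le_reg_l with l; nra. }
  assert (Herr : (k' s - q) * (t - s) <= eps).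
  { apply Rle_trans with (Rabs (q - k' s) * Rabs (t - s)).
    - rewrite <- Rabs_mult. rewrite <- Rabs_Ropp. eapply Rle_trans; [|apply Rle_abs]. lra.
    - apply Rlt_le. replace eps with (eps / Rabs (t - s) * Rabs (t - s)) by (field; lra).
      apply Rmult_lt_compat_r; lra. }
  lra.
Qed.

Lemma profile_deriv_nonpos s : 0 <= s -> k' s <= 0.
Proof.
  intros Hs. pose proof (profile_tangent s (s + 1) Hs ltac:(lra)).
  pose proof (profile_nonincreasing s (s + 1) Hs ltac:(lra)).
  replace (s + 1 - s) with 1 in * by ring. lra.
Qed.

(* At [0], [k] is squeezed between its tangent line and the constant [k 0]. *)
Lemma profile_rcont0 : filterlim k (at_right 0) (locally (k 0)).
Proof.
  apply (filterlim_le_le (fun y => k 0 + k' 0 * y) k (fun _ => k 0) (k 0)).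
  - exists (mkposreal 1 Rlt_0_1). intros y _ Hy. split.
    + pose proof (profile_tangent 0 y ltac:(lra) ltac:(lra)). lra.
    + apply profile_nonincreasing; lra.
  - apply (filterlim_filter_le_1 (F := locally 0)); [apply filter_le_within|].
    assert (Htan : continuous (fun y => k 0 + k' 0 * y) 0).
    { apply continuous_Rplus; [apply continuous_const|].
      apply continuous_Rmult; [apply continuous_const|apply continuous_id]. }
    unfold continuous in Htan. rewrite Rmult_0_r, Rplus_0_r in Htan. exact Htan.
  - apply filterlim_const.
Qed.

Lemma profile_continuous_comp (q : R -> R) x :
  (forall y, 0 <= q y) -> continuous q x -> continuous (fun y => k (q y)) x.
Proof.
  apply continuous_comp_nonneg; [exact profile_rcont0|].
  intros t Ht. apply (ex_derive_continuous (K := R_AbsRing) (V := R_NormedModule)).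
  exists (k' t). apply profile_is_derive, Ht.
Qed.

Lemma profile_deriv_continuous_comp (q : R -> R) x :
  (forall y, 0 <= q y) -> continuous q x -> continuous (fun y => k' (q y)) x.
Proof.
  apply continuous_comp_nonneg; [exact profile_deriv_rcont0|exact profile_deriv_continuous].
Qed.

End Profile.

Lemma sumR_weighted_sqdist_barycenter d n (g : nat -> R) (P : state) c (x y : vec) :
  (forall l, y l * sumR n g = sumR n (fun j => g j * P j l)) ->
  sumR n (fun j => g j * sqnorm d (vscale c (vdiff x (P j))))
  = sumR n (fun j => g j * sqnorm d (vscale c (vdiff y (P j))))
    + sumR n g * sqnorm d (vscale c (vdiff x y)).
Proof.
  intros Hy.
  transitivity (sumR n (fun j => g j * sqnorm d (vscale c (vdiff y (P j))))
    + sumR n (fun j => sumR d (fun l =>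
        c ^ 2 * (x l - y l) * (x l + y l - 2 * P j l) * g j))).
  { rewrite <- sumR_plus. apply sumR_ext. intros j _. unfold sqnorm.
    rewrite <- !sumR_scal, <- sumR_plus. apply sumR_ext. intros l _.
    unfold vscale, vdiff. ring. }
  f_equal. rewrite sumR_swap. unfold sqnorm. rewrite <- sumR_scal.
  apply sumR_ext. intros l _.
  transitivity (sumR n (fun j => c ^ 2 * (x l - y l) * (x l + y l) * g j
                                 + (-2 * c ^ 2 * (x l - y l)) * (g j * P j l))).
  { apply sumR_ext. intros. ring. }
  rewrite sumR_plus, !sumR_scal, <- Hy. unfold vscale, vdiff. ring.
Qed.

Section MeanShift.

Variables k k' : R -> R.
Variables n d : nat.
Hypothesis Hprof : is_profile k k'.

Lemma Gw_nonneg u : 0 <= Gw k' d u.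
Proof. unfold Gw. pose proof (profile_deriv_nonpos k k' Hprof _ (sqnorm_nonneg d u)). lra. Qed.

Lemma sumR_Gw_pos c X i : (i < n)%nat ->
  0 < sumR n (fun j => Gw k' d (vscale c (vdiff (X i) (X j)))).
Proof.
  intros Hi. eapply Rlt_le_trans; [|apply (sumR_ge_term _ _ i); [intros; apply Gw_nonneg|exact Hi]].
  unfold Gw. rewrite sqnorm_scale_diff_self.
  pose proof (profile_deriv_neg k k' Hprof 0 ltac:(lra)). lra.
Qed.

Lemma Lcost_nonneg h X : 0 <= Lcost k n d h X.
Proof.
  apply sumR_nonneg. intros b _. apply sumR_nonneg. intros a _.
  apply (profile_nonneg k k' Hprof), sqnorm_nonneg.
Qed.

Lemma Lcost_replace_ge h X i y : (i < n)%nat ->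
  Lcost k n d h X
  + sumR n (fun j => Gw k' d (vscale (/ h) (vdiff (X i) (X j)))
      * (sqnorm d (vscale (/ h) (vdiff (X i) (X j))) - sqnorm d (vscale (/ h) (vdiff y (X j)))))
  <= Lcost k n d h (fun j => if Nat.eqb j i then y else X j).
Proof.
  intros Hi. set (s := fun j => sqnorm d (vscale (/ h) (vdiff (X i) (X j)))).
  set (t := fun j => sqnorm d (vscale (/ h) (vdiff y (X j)))).
  assert (Htan : forall j, k (s j) + - k' (s j) * (s j - t j) <= k (t j)).
  { intros j. pose proof (profile_tangent k k' Hprof (s j) (t j)
      (sqnorm_nonneg _ _) (sqnorm_nonneg _ _)). lra. }
  rewrite <- (sumR_pairs_through n i _ Hi). unfold Lcost.
  rewrite <- sumR_plus. apply sumR_le. intros b _.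
  rewrite <- sumR_plus. apply sumR_le. intros a _. unfold Kker, Gw.
  destruct (Nat.eqb_spec a i) as [->|Hai], (Nat.eqb_spec b i) as [->|Hbi].
  - rewrite !sqnorm_scale_diff_self.
    pose proof (profile_deriv_nonpos k k' Hprof 0 ltac:(lra)).
    pose proof (sqnorm_nonneg d (vscale (/ h) (vdiff y (X i)))). nra.
  - apply Htan.
  - rewrite (sqnorm_scale_diff_sym d _ (X a) y), (sqnorm_scale_diff_sym d _ (X a) (X i)).
    apply Htan.
  - lra.
Qed.

Lemma Lcost_ms_step_ge h X i : (i < n)%nat ->
  Lcost k n d h X <= Lcost k n d h (ms_step k' n d h X i).
Proof.
  intros Hi. set (y := meanshift k' n d h X (X i)).
  set (g := fun j => Gw k' d (vscale (/ h) (vdiff (X i) (X j)))).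
  assert (Hg : 0 < sumR n g) by apply (sumR_Gw_pos _ _ _ Hi).
  assert (Hbary := sumR_weighted_sqdist_barycenter d n g X (/ h) (X i) y).
  rewrite <- Rplus_0_r at 1. eapply Rle_trans; [|apply (Lcost_replace_ge h X i y Hi)].
  apply Rplus_le_compat_l. fold g.
  transitivity (sumR n g * sqnorm d (vscale (/ h) (vdiff (X i) y))).
  { apply Rmult_le_pos; [lra|apply sqnorm_nonneg]. }
  right. transitivity (sumR n (fun j => g j * sqnorm d (vscale (/ h) (vdiff (X i) (X j))))
    - sumR n (fun j => g j * sqnorm d (vscale (/ h) (vdiff y (X j))))).
  - rewrite Hbary; [ring|]. intros l.
    change (sumR n (fun j => g j * X j l) / sumR n g * sumR n g
      = sumR n (fun j => g j * X j l)).
    field. lra.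
  - rewrite <- sumR_minus. apply sumR_ext. intros. unfold g. ring.
Qed.

Lemma Lcost_le_mean_update h X : (1 <= n)%nat ->
  Lcost k n d h X <= / INR n * sumR n (fun i => Lcost k n d h (ms_step k' n d h X i)).
Proof.
  intros Hn. assert (Hn0 : 0 < INR n) by (apply lt_0_INR; lia).
  apply Rle_trans with (/ INR n * sumR n (fun _ => Lcost k n d h X)).
  { rewrite sumR_const. right. field. lra. }
  apply Rmult_le_compat_l; [left; apply Rinv_0_lt_compat, Hn0|].
  apply sumR_le. intros i Hi. apply Lcost_ms_step_ge, Hi.
Qed.

Lemma inv_newh h a : / newh h a = sqrt a * / h.
Proof. unfold newh, Rdiv. rewrite Rinv_mult, Rinv_inv. ring. Qed.

Lemma sqnorm_scale_newh h a v : 0 <= a ->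
  sqnorm d (vscale (/ newh h a) v) = a * sqnorm d (vscale (/ h) v).
Proof.
  intros Ha. rewrite !sqnorm_scale, inv_newh, Rpow_mult_distr, pow2_sqrt by exact Ha. ring.
Qed.

Lemma Lcost_newh_affine_minorant h X :
  exists b, forall a, 0 <= a -> Lcost k n d h X + (a - 1) * b <= Lcost k n d (newh h a) X.
Proof.
  set (r := fun a' b' => sqnorm d (vscale (/ h) (vdiff (X a') (X b')))).
  exists (sumR n (fun b' => sumR (S b') (fun a' => k' (r a' b') * r a' b'))).
  intros a Ha. unfold Lcost. rewrite <- sumR_scal, <- sumR_plus. apply sumR_le. intros b' _.
  rewrite <- sumR_scal, <- sumR_plus. apply sumR_le. intros a' _.
  unfold Kker. rewrite sqnorm_scale_newh by exact Ha. fold (r a' b').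
  assert (Hr : 0 <= r a' b') by apply sqnorm_nonneg.
  pose proof (profile_tangent k k' Hprof (r a' b') (a * r a' b') Hr ltac:(nra)). nra.
Qed.

Lemma Lcost_ms_step_continuous (H : R -> R) X i x : (i < n)%nat ->
  continuous (fun y => / H y) x ->
  continuous (fun y => Lcost k n d (H y) (ms_step k' n d (H y) X i)) x.
Proof.
  intros Hi HH.
  assert (Hsq : forall (V : R -> vec), (forall l, continuous (fun y => V y l) x) ->
      continuous (fun y => sqnorm d (vscale (/ H y) (V y))) x).
  { intros V HV. apply continuous_sumR. intros l _. apply continuous_pow2.
    apply continuous_Rmult; [exact HH|apply HV]. }
  assert (Hw : forall j, continuous (fun y => Gw k' d (vscale (/ H y) (vdiff (X i) (X j)))) x).
  { intros j. apply continuous_Ropp.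
    apply (profile_deriv_continuous_comp k k' Hprof
      (fun y => sqnorm d (vscale (/ H y) (vdiff (X i) (X j))))); [intros; apply sqnorm_nonneg|].
    apply Hsq. intros. apply continuous_const. }
  assert (Hstep : forall p l, continuous (fun y => ms_step k' n d (H y) X i p l) x).
  { intros p l. unfold ms_step. destruct (Nat.eqb p i); [|apply continuous_const].
    apply continuous_Rdiv.
    - apply continuous_sumR. intros j _. apply continuous_Rmult; [apply Hw|apply continuous_const].
    - apply continuous_sumR. intros j _. apply Hw.
    - apply Rgt_not_eq, sumR_Gw_pos, Hi. }
  apply continuous_sumR. intros b _. apply continuous_sumR. intros a _.
  apply (profile_continuous_comp k k' Hprof (fun y => sqnorm d (vscale (/ H y)
    (vdiff (ms_step k' n d (H y) X i a) (ms_step k' n d (H y) X i b)))));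
    [intros; apply sqnorm_nonneg|].
  apply Hsq. intros l. apply continuous_Rminus; apply Hstep.
Qed.

Lemma mean_update_newh_continuous h X a :
  continuous (fun a' => / INR n * sumR n (fun i =>
    Lcost k n d (newh h a') (ms_step k' n d (newh h a') X i))) a.
Proof.
  apply continuous_Rmult; [apply continuous_const|].
  apply continuous_sumR. intros i Hi. apply Lcost_ms_step_continuous; [exact Hi|].
  apply (continuous_ext (fun a' => sqrt a' * / h)); [intros; symmetry; apply inv_newh|].
  apply continuous_Rmult; [apply continuous_sqrt|apply continuous_const].
Qed.

End MeanShift.

Lemma delta_le_1 hmin hmax nuk h : delta hmin hmax nuk h <= 1.
Proof.
  unfold delta. pose proof (pow2_ge_0 (h / hmax)).
  pose proof (Rmin_r nuk (Rmin ((h / hmin) ^ 2 - 1) (1 - (h / hmax) ^ 2))).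
  pose proof (Rmin_r ((h / hmin) ^ 2 - 1) (1 - (h / hmax) ^ 2)). lra.
Qed.

Lemma E_alpha_ge_affine_minorant del c b (f : R -> R) :
  del <= 1 -> (forall a, continuous f a) ->
  (forall a, 0 <= a -> c + (a - 1) * b <= f a) -> c <= E_alpha del f.
Proof.
  intros Hdel Hf Hmin. unfold E_alpha.
  destruct (Rlt_dec 0 del) as [Hpos|_]; [|pose proof (Hmin 1 ltac:(lra)); lra].
  assert (Haff : is_RInt (fun a => c + (a - 1) * b) (1 - del) (1 + del) (2 * del * c)).
  { set (F := fun a => c * a + b * (a - 1) ^ 2 / 2).
    replace (2 * del * c) with (minus (F (1 + del)) (F (1 - del)))
      by (unfold minus, plus, opp, F; simpl; field).
    apply (is_RInt_derive (V := R_CompleteNormedModule) F).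
    - intros a _. unfold F. auto_derive; [exact I|]. field.
    - intros a _. apply continuous_Rplus; [apply continuous_const|].
      apply continuous_Rmult; [|apply continuous_const].
      apply continuous_Rminus; [apply continuous_id|apply continuous_const]. }
  assert (Hle : 2 * del * c <= RInt f (1 - del) (1 + del)).
  { rewrite <- (is_RInt_unique _ _ _ _ Haff). apply RInt_le; [lra| |
      |intros a Ha; apply Hmin; lra].
    - exists (2 * del * c). exact Haff.
    - apply (ex_RInt_continuous (V := R_CompleteNormedModule)). intros a _. apply Hf. }
  apply Rmult_le_reg_r with (2 * del); [lra|].
  unfold Rdiv. rewrite Rmult_assoc, Rinv_l by lra. lra.
Qed.

Theorem proposition2 (k k' : R -> R) (n d : nat) (hmin hmax h1 : R)
    (X0 : state) (nu : nat -> R) :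
  (1 <= n)%nat -> (1 <= d)%nat ->
  0 < hmin -> hmin < hmax -> hmin <= h1 <= hmax ->
  (forall m, 0 <= nu m) -> is_lim_seq nu 0 ->
  is_profile k k' ->
  forall (m : nat) (X : state) (h : R), (1 <= m)%nat ->
    reachable k' n d hmin hmax nu X0 h1 m X h ->
    0 <= Lcost k n d h X /\
    Lcost k n d h X <= cond_exp_next k k' n d hmin hmax (nu m) X h.
Proof.
  intros Hn _ _ _ _ _ _ Hprof m X h _ _.
  split; [apply (Lcost_nonneg k k' n d Hprof)|].
  destruct (Lcost_newh_affine_minorant k k' n d Hprof h X) as [b Hb].
  apply (E_alpha_ge_affine_minorant _ _ b).
  - apply delta_le_1.
  - apply (mean_update_newh_continuous k k' n d Hprof).
  - intros a Ha. eapply Rle_trans; [apply Hb, Ha|].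
    apply (Lcost_le_mean_update k k' n d Hprof _ _ Hn).
Qed.
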